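(* In the setting below, one of the following holds: (1) $\max_{g\in G_-}|\delta(g)| = E_k-\lfloor E_k\rfloor_2$; or (2) $\max_{g\in G_-}|\delta(g)|\ge E_k-\lfloor E_k\rfloor_2+2$.
   Context: Let $\Lambda_{24}\subset\mathbb{R}^{24}$ be the Leech lattice scaled so its minimal nonzero vectors have length $2$, and $\mathcal C$ the set of its $196560$ minimal vectors. Let $\mathrm{Co}_0$ be the finite group of linear isometries of $\mathbb{R}^{24}$ mapping $\Lambda_{24}$ onto itself; it acts (transitively) on $\mathcal C$. A set $X\subseteq\mathcal C$ is antipodal if $X=-X$. Fix an antipodal $S\subseteq\mathcal C$ with $\langle x,y\rangle\le1$ for distinct $x,y\in S$. Let $k\ge1$, $S_1=S$, $g_1=\mathrm{id}$, and for $2\le j\le k$ let $S_j=g_jS\setminus(S_1\cup\dots\cup S_{j-1})$ for some $g_j\in\mathrm{Co}_0$, where moreover $|S_j|\ge|S|\bigl(1-\sum_{i<j}|S_i|/|\mathcal C|\bigr)$. Put $U_k=S_1\cup\dots\cup S_k$ and $E_k=\mathbb{E}_{g}\,|gS\cap U_k|$ for $g$ uniformly random in $\mathrm{Co}_0$. For real $x$, $\lfloor x\rfloor_2$ is the greatest even integer $\le x$ and $\lceil x\rceil_2$ the least even integer $\ge x$. For $g\in\mathrm{Co}_0$ let $\delta(g)=|gS\cap U_k|-E_k$, and $G_+=\{g:\delta(g)>0\}$, $G_-=\{g:\delta(g)<0\}$. *)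

From HB Require Import structures.
From mathcomp Require Import all_boot all_order all_algebra.
From mathcomp Require Import finmap.
From mathcomp Require Import boolp classical_sets fsbigop reals.
Set Implicit Arguments. Unset Strict Implicit. Unset Printing Implicit Defensive.
Import Order.TTheory GRing.Theory Num.Theory.
Local Open Scope ring_scope.
Local Open Scope fset_scope.

(* ---------- The extended binary Golay code (length 24) ----------
   Coordinates 0..22 = Z/23, coordinate 23 = infinity.  The code is the
   extended quadratic-residue code: spanned by the all-ones word and the 23
   cyclic shifts of the indicator of {0} ∪ QR(23), QR(23) = squares mod 23. *)
Definition qr23 : seq nat := [:: 0; 1; 2; 3; 4; 6; 8; 9; 12; 13; 16; 18]%N.

Definition golay_gen (i : 'I_24) : {ffun 'I_24 -> bool} :=
  if (i < 23)%N then
    [ffun p : 'I_24 => (p < 23)%N && has (fun b => (b + i) %% 23 == p)%N qr23]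
  else [ffun => true].

Definition golay_word (c : {ffun 'I_24 -> bool}) : {ffun 'I_24 -> bool} :=
  [ffun p => \big[addb/false]_(i : 'I_24 | c i) golay_gen i p].

Definition in_golay (w : {ffun 'I_24 -> bool}) : bool :=
  [exists c, golay_word c == w].

(* ---------- The Leech lattice, integral model (Conway–Sloane) ----------
   x ∈ Z^24 is in L iff for some m ∈ {0,1}: all x_i ≡ m (mod 2),
   Σ x_i ≡ 4m (mod 8), and for each a, {i | x_i ≡ a (mod 4)} is a Golay
   codeword.  The Leech lattice is Λ = L / √8 (minimal norm 4, length 2). *)
Definition leechZ (x : 'I_24 -> int) : bool :=
  [exists m : 'I_2,
    [&& [forall i, ((x i - (m : nat)%:Z) %% 2)%Z == 0],
        (((\sum_i x i) - 4 * (m : nat)%:Z) %% 8)%Z == 0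
      & [forall a : 'I_4,
           in_golay [ffun i => ((x i) %% 4)%Z == (a : nat)%:Z]]]].

Section Leech.
Variable R : realType.

Definition vdot (u v : 'rV[R]_24) : R := \sum_i u 0 i * v 0 i.

Definition Leech : set 'rV[R]_24 :=
  [set v | exists x : 'I_24 -> int,
      leechZ x /\ v = \row_i ((x i)%:~R / Num.sqrt 8)].

Definition Cmin : set 'rV[R]_24 := [set v | Leech v /\ vdot v v = 4].

Definition Co0 : set 'M[R]_24 :=
  [set M | (forall u v, vdot (u *m M) (v *m M) = vdot u v) /\
           image Leech (fun v : 'rV[R]_24 => v *m M) = Leech].

Definition act (M : 'M[R]_24) (X : {fset 'rV[R]_24}) : {fset 'rV[R]_24} :=
  [fset (v : 'rV[R]_24) *m M | v in X].

Definition antipodal (X : {fset 'rV[R]_24}) : Prop := [fset - v | v in X] = X.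

Definition Spart_of (S : {fset 'rV[R]_24}) (g : nat -> 'M[R]_24)
  (Uprev : {fset 'rV[R]_24}) (j : nat) : {fset 'rV[R]_24} :=
  if j == 1%N then S else act (g j) S `\` Uprev.

Fixpoint Ucov (S : {fset 'rV[R]_24}) (g : nat -> 'M[R]_24) (j : nat)
  : {fset 'rV[R]_24} :=
  match j with
  | 0 => fset0
  | j'.+1 => Ucov S g j' `|` Spart_of S g (Ucov S g j') j'.+1
  end.

Definition Spart S g (j : nat) := Spart_of S g (Ucov S g j.-1) j.

Definition Ek S g (k : nat) : R :=
  (\sum_(h \in Co0) ((#|` act h S `&` Ucov S g k|)%:R : R)) /
  (\sum_(h \in Co0) (1 : R) : R).

Definition delta S g k (h : 'M[R]_24) : R :=
  (#|` act h S `&` Ucov S g k|)%:R - Ek S g k.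

Definition floor2 (x : R) : R := (2 * Num.floor (x / 2))%:~R.

End Leech.

(* The intersection gS ∩ U_k is antipodal (S is, g is linear, and the greedy
   construction only takes unions and differences of antipodal sets) and does
   not contain 0 (g is an isometry and S consists of vectors of norm 4), so its
   size N is even.  An even integer N < E_k is at most ⌊E_k⌋_2, hence
   |δ(g)| = E_k - N is either E_k - ⌊E_k⌋_2 or at least 2 more. *)

From HB Require Import structures.
From mathcomp Require Import all_boot all_order all_algebra.
From mathcomp Require Import finmap.
From mathcomp Require Import boolp classical_sets fsbigop reals.
From mathcomp Require Import zify lra.
Import Order.TTheory GRing.Theory Num.Theory.
Local Open Scope ring_scope.
Local Open Scope fset_scope.

Lemma fixfree_involution_card_even (T : choiceType) (f : T -> T) (X : {fset T}) :
  involutive f -> {in X, forall x, f x \in X} -> {in X, forall x, f x != x} ->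
  ~~ odd #|` X|.
Proof.
move=> fK fX fx; have [n] := ubnP #|` X|; elim: n X fX fx => // n IH X fX fx.
case: (fset_0Vmem X) => [->|[x xX] ltXn]; first by rewrite cardfs0.
set Y := X `\ x `\ f x.
have fxY : f x \in X `\ x by rewrite !inE fx ?fX.
have cardX : #|` X| = (#|` Y| + 2)%N.
  by rewrite (cardfsD1 x X) (cardfsD1 (f x) (X `\ x)) xX fxY addnA addnC.
have fY : {in Y, forall y, f y \in Y}.
  move=> y; rewrite !inE => /and3P[yfx yx yX]; rewrite fX // andbT.
  rewrite (inj_eq (can_inj fK)) yx /=.
  by apply: contraNneq yfx => <-; rewrite fK.
rewrite cardX addn2 /= negbK; apply: IH fY _ _.
- by move=> y /[!inE] /and3P[_ _]; apply: fx.
- by move: ltXn; rewrite cardX; lia.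
Qed.

Lemma oppr_closed_card_even (F : numFieldType) (V : lmodType F) (X : {fset V}) :
  oppr_closed [in X] -> 0 \notin X -> ~~ odd #|` X|.
Proof.
move=> XN X0; apply: fixfree_involution_card_even opprK XN _ => v vX.
apply: contraNneq X0 => vNv.
have : 2%:R *: v == 0 by rewrite scaler_nat mulr2n -{1}vNv addNr.
by rewrite scaler_eq0 pnatr_eq0 => /eqP <-.
Qed.

Section OpprClosedFset.
Variable V : zmodType.
Implicit Types A B : {fset V}.

Lemma oppr_closedU A B :
  oppr_closed [in A] -> oppr_closed [in B] -> oppr_closed [in A `|` B].
Proof. by move=> AN BN v /[!inE] /orP[/AN|/BN] ->; rewrite ?orbT. Qed.

Lemma oppr_closedI A B :
  oppr_closed [in A] -> oppr_closed [in B] -> oppr_closed [in A `&` B].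
Proof. by move=> AN BN v /[!inE] /andP[/AN -> /BN ->]. Qed.

Lemma oppr_closedD A B :
  oppr_closed [in A] -> oppr_closed [in B] -> oppr_closed [in A `\` B].
Proof.
move=> AN BN v /[!inE] /andP[vB /AN ->]; rewrite andbT.
by apply: contra vB => /BN; rewrite opprK.
Qed.

End OpprClosedFset.

Section LeechSymmetry.
Variable R : realType.
Implicit Types (S : {fset 'rV[R]_24}) (M : 'M[R]_24).

Lemma antipodal_oppr_closed S : antipodal S -> oppr_closed [in S].
Proof. by move=> SN v vS; rewrite -SN; apply: in_imfset. Qed.

Lemma oppr_closed_act M S : oppr_closed [in S] -> oppr_closed [in act M S].
Proof. by move=> SN _ /imfsetP[v vS ->]; rewrite -mulNmx; apply/in_imfset/SN. Qed.

Lemma oppr_closed_Ucov S g j : oppr_closed [in S] -> oppr_closed [in Ucov S g j].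
Proof.
move=> SN; elim: j => [|j IH] /=; first by move=> v; rewrite inE.
apply: oppr_closedU (IH) _; rewrite /Spart_of; case: ifP => // _.
by apply: oppr_closedD; [apply: oppr_closed_act|].
Qed.

Lemma vdot0r (v : 'rV[R]_24) : vdot 0 v = 0.
Proof. by rewrite /vdot big1 // => i _; rewrite mxE mul0r. Qed.

Lemma zero_notin_act S M :
  (forall x, x \in S -> Cmin x) ->
  (forall u v, vdot (u *m M) (v *m M) = vdot u v) -> 0 \notin act M S.
Proof.
move=> SC Miso; apply/imfsetP => -[u uS u0]; have [_ uu] := SC u uS.
by move: uu; rewrite -Miso -u0 vdot0r => /eqP; rewrite eq_sym pnatr_eq0.
Qed.

Lemma card_act_Ucov_even S g k M :
  (forall x, x \in S -> Cmin x) -> antipodal S -> Co0 M ->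
  ~~ odd #|` act M S `&` Ucov S g k|.
Proof.
move=> SC /antipodal_oppr_closed SN [Miso _].
apply: oppr_closed_card_even.
  by apply: oppr_closedI; [apply: oppr_closed_act | apply: oppr_closed_Ucov].
by rewrite inE negb_and zero_notin_act.
Qed.

End LeechSymmetry.

Local Close Scope fset_scope.

Lemma floor2_even_dichotomy (R : realType) (E : R) (n : nat) :
  ~~ odd n -> n%:R < E ->
  E - n%:R = E - floor2 E \/ E - floor2 E + 2 <= E - n%:R.
Proof.
move=> n_even; rewrite /floor2; set f := Num.floor (E / 2).
have [m -> nE] : exists m : nat, n = (m * 2)%N.
  by exists n./2; rewrite -{1}(odd_double_half n) (negbTE n_even) muln2.
have le_mf : m%:Z <= f.
  by rewrite floor_ge_int ler_pdivlMr //; apply: ltW; rewrite -[m%:~R]/(m%:R) -natrM.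
have -> : (m * 2)%:R = (2 * m%:Z)%:~R :> R by rewrite intrM natrM mulrC.
have [->|ne_mf] := eqVneq m%:Z f; [by left | right].
have : ((2 * m%:Z + 2)%:~R : R) <= (2 * f)%:~R by rewrite ler_int; lia.
by rewrite intrD; lra.
Qed.

Lemma max_attained_or_gap {T : Type} {R : numDomainType} {P Q : T -> Prop}
    (d : T -> R) (a b : R) :
  (exists t, P t /\ Q t) -> (forall t, P t -> Q t -> d t = a \/ b <= d t) ->
  ((forall t, P t -> Q t -> d t <= a) /\ (exists t, P t /\ Q t /\ d t = a))
  \/ (exists t, P t /\ Q t /\ b <= d t).
Proof.
move=> [t0 [Pt0 Qt0]] dab.
have [gap|no_gap] := pselect (exists t, P t /\ Q t /\ b <= d t); [by right | left].
have eq_a t : P t -> Q t -> d t = a.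
  by move=> Pt Qt; case: (dab t Pt Qt) => // bd; case: no_gap; exists t.
by split=> [t Pt Qt|]; [rewrite eq_a | exists t0; rewrite eq_a].
Qed.

Theorem lemma4p2 (R : realType) (S : {fset 'rV[R]_24}) (k : nat)
    (g : nat -> 'M[R]_24) :
  (forall x, x \in S -> Cmin x) ->
  antipodal S ->
  (forall x y, x \in S -> y \in S -> x != y -> vdot x y <= 1) ->
  (1 <= k)%N ->
  (forall j, (2 <= j <= k)%N -> Co0 (g j)) ->
  (forall j, (2 <= j <= k)%N ->
     (#|` Spart S g j|)%:R >=
       (#|` S|)%:R * (1 - (\sum_(1 <= i < j) ((#|` Spart S g i|)%:R : R))
                           / 196560%:R)) ->
  (exists h, Co0 h /\ delta S g k h < 0) ->
  ((forall h, Co0 h -> delta S g k h < 0 ->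
      `|delta S g k h| <= Ek S g k - floor2 (Ek S g k)) /\
   (exists h, Co0 h /\ delta S g k h < 0 /\
      `|delta S g k h| = Ek S g k - floor2 (Ek S g k)))
  \/
  (exists h, Co0 h /\ delta S g k h < 0 /\
      `|delta S g k h| >= Ek S g k - floor2 (Ek S g k) + 2).
Proof.
move=> SC SN _ _ _ _ neg_ex.
apply: (max_attained_or_gap (fun h => `|delta S g k h|)) neg_ex _ => h Mh dh.
rewrite ltr0_norm // opprB; apply: floor2_even_dichotomy.
  exact: card_act_Ucov_even.
by rewrite -subr_lt0.
Qed.
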